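(* Let $m\geq1$ and let $S=\bigsqcup_{\mathcal{O}}\mathcal{O}^{a(\mathcal{O})}$ be a finite $F_m^0$-set, where $\mathcal{O}$ runs over isomorphism classes of strongly finite transitive $F_m^0$-sets and the multiplicities $a(\mathcal{O})\in\mathbb{N}$ are almost all zero. Then the $F_m^0$-action on $S$ extends to an $F_m$-action if and only if $a(\mathcal{O})=a(z_1(\mathcal{O}))$ for every strongly finite transitive $F_m^0$-set $\mathcal{O}$.
   Context: $F_m$ is the free group on $z_1,\dots,z_m$, $\upsilon:F_m\to\mathbb{Z}$ the homomorphism with $\upsilon(z_i)=1$ for all $i$, and $F_m^0=\ker\upsilon$. For an $F_m^0$-set $S$ and $t\in\mathbb{Z}$, $z_1^t(S)$ denotes the set $S$ with the $F_m^0$-action $g\cdot s=z_1^{-t}gz_1^ts$. A finite transitive $F_m^0$-set $\mathcal{O}$ is strongly finite if $z_1^k(\mathcal{O})\cong\mathcal{O}$ for some integer $k>0$; then $z_1(\mathcal{O})$ is again strongly finite transitive. *)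

From HB Require Import structures.
From mathcomp Require Import all_boot all_order all_algebra.
From mathcomp Require Import boolp.
Set Implicit Arguments. Unset Strict Implicit. Unset Printing Implicit Defensive.
Import GRing.Theory Num.Theory.
Local Open Scope ring_scope.

(* Free group F_m on z_1..z_m, encoded by words in letters (i, b):
   (i, true) = z_(i+1), (i, false) = z_(i+1)^-1.  Group elements are words
   up to free reduction; actions are required to respect free reduction. *)
Definition letter (m : nat) := ('I_m * bool)%type.
Definition word (m : nat) := seq (letter m).
Definition linv {m} (x : letter m) : letter m := (x.1, ~~ x.2).

Definition ups {m} (w : word m) : int :=
  \sum_(x <- w) (if x.2 then 1 else -1).
(* membership in F_m^0 = ker upsilon *)
Definition inK {m} (w : word m) : bool := ups w == 0.

Definition is_F_action {m} {S : Type} (act : word m -> S -> S) : Prop :=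
  [/\ (forall s, act [::] s = s),
      (forall u v s, act (u ++ v) s = act u (act v s)) &
      (forall x s, act [:: x; linv x] s = s)].

(* an action of F_m^0 on S: defined on kernel words, well defined modulo
   free reduction, and multiplicative (values on non-kernel words irrelevant) *)
Definition is_F0_action {m} {S : Type} (act : word m -> S -> S) : Prop :=
  [/\ (forall s, act [::] s = s),
      (forall u v s, inK u -> inK v -> act (u ++ v) s = act u (act v s)) &
      (forall u v x s, inK (u ++ v) ->
          act (u ++ x :: linv x :: v) s = act (u ++ v) s)].

Definition z1 {n} : letter n.+1 := (ord0, true).
Definition z1pow {n} (t : int) : word n.+1 :=
  match t with
  | Posz k => nseq k z1
  | Negz k => nseq k.+1 (linv z1)
  end.

(* z_1^t(S): g . s = z_1^-t g z_1^t s *)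
Definition twist {n} {S : Type} (t : int) (act : word n.+1 -> S -> S) :=
  fun w s => act (z1pow (- t) ++ w ++ z1pow t) s.

Definition F0_iso {m} {S T : Type} (actS : word m -> S -> S)
    (actT : word m -> T -> T) : Prop :=
  exists f : S -> T, bijective f /\
    forall w s, inK w -> f (actS w s) = actT w (f s).

Definition F0_transitive {m} {S : Type} (act : word m -> S -> S) : Prop :=
  (exists s : S, True) /\
  forall s s' : S, exists w, inK w /\ act w s = s'.

Definition strongly_finite {n} {S : Type} (act : word n.+1 -> S -> S) : Prop :=
  exists k : nat, (0 < k)%N /\ F0_iso (twist (k%:Z) act) act.

Definition orb {m} {S : finType} (act : word m -> S -> S) (s : S) : {set S} :=
  [set x | `[< exists w, inK w /\ act w s = x >]].

Definition orbit_iso {m} {S O : finType} (act : word m -> S -> S)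
    (actO : word m -> O -> O) (A : {set S}) : Prop :=
  exists f : O -> S,
    [/\ injective f,
        (forall x, x \in A <-> exists o, f o = x) &
        (forall w o, inK w -> f (actO w o) = act w (f o))].

Definition mult {m} {S O : finType} (act : word m -> S -> S)
    (actO : word m -> O -> O) : nat :=
  #|[set A : {set S} | `[< (exists s, A = orb act s) /\ orbit_iso act actO A >]]|.

From HB Require Import structures.
From mathcomp Require Import all_boot all_order all_algebra.
From mathcomp Require Import boolp.
From mathcomp Require Import zify.
Set Implicit Arguments. Unset Strict Implicit. Unset Printing Implicit Defensive.
Import GRing.Theory.

(* An F_m-action extending the F_m^0-action amounts to a bijection sigma of S
   (the action of z_1) with sigma (g s) = (z_1 g z_1^-1) (sigma s) for g in
   F_m^0.  Such a sigma carries every orbit O isomorphically onto an orbit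
   isomorphic to z_1(O), which gives a(O) = a(z_1(O)).  Conversely, when these
   multiplicities agree, the orbits isomorphic to O can be matched bijectively
   with those isomorphic to z_1(O); gluing the corresponding isomorphisms gives
   sigma, and a word w then acts by letting its image in <z_1> (each z_i^e
   replaced by z_1^e) act through sigma, followed by the element
   w (z_1-image of w)^-1 of F_m^0. *)

Section Words.
Local Open Scope ring_scope.
Variable m : nat.
Implicit Types (x y : letter m) (u v w p q : word m).

Lemma ups_nil : ups ([::] : word m) = 0.
Proof. by rewrite /ups big_nil. Qed.

Lemma ups_cons x w : ups (x :: w) = (if x.2 then 1 else -1) + ups w.
Proof. by rewrite /ups big_cons. Qed.

Lemma ups_cat u v : ups (u ++ v) = ups u + ups v.
Proof. by rewrite /ups big_cat. Qed.

Lemma ups_nseq k x : ups (nseq k x) = if x.2 then k%:Z else - k%:Z.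
Proof. by elim: k => [|k IH]; rewrite ?ups_nil ?ups_cons ?IH; case: x.2 => //=; lia. Qed.

Lemma linvK : involutive (@linv m).
Proof. by case=> i b; rewrite /linv /= negbK. Qed.

Lemma ups_cancel x v : ups (x :: linv x :: v) = ups v.
Proof. by rewrite !ups_cons /=; case: x.2 => /=; lia. Qed.

Definition winv w : word m := rev (map linv w).

Lemma winv_cons x w : winv (x :: w) = winv w ++ [:: linv x].
Proof. by rewrite /winv /= rev_cons cats1. Qed.

Lemma winv_cat u v : winv (u ++ v) = winv v ++ winv u.
Proof. by rewrite /winv map_cat rev_cat. Qed.

Lemma winvK : involutive winv.
Proof. by move=> w; rewrite /winv map_rev revK -map_comp (eq_map linvK) map_id. Qed.

Lemma ups_winv w : ups (winv w) = - ups w.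
Proof.
elim: w => [|x w IH]; first by rewrite ups_nil.
by rewrite winv_cons ups_cat IH !ups_cons ups_nil /=; case: x.2 => /=; lia.
Qed.

Lemma inK_cat u v : inK u -> inK v -> inK (u ++ v).
Proof. by rewrite /inK ups_cat => /eqP -> /eqP ->. Qed.

Lemma inK_winv w : inK (winv w) = inK w.
Proof. by rewrite /inK ups_winv oppr_eq0. Qed.

Definition conjw x w : word m := x :: w ++ [:: linv x].

Lemma inK_conj x w : inK w -> inK (conjw x w).
Proof.
rewrite /inK /conjw ups_cons ups_cat ups_cons ups_nil => /eqP ->.
by case: x => i [] /=; apply/eqP; lia.
Qed.

Variable i : 'I_m.

Definition proj_gen w : word m := map (fun x => (i, x.2)) w.

Definition on_gen w := all (fun x => x.1 == i) w.

Lemma proj_gen_cat u v : proj_gen (u ++ v) = proj_gen u ++ proj_gen v.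
Proof. exact: map_cat. Qed.

Lemma ups_proj_gen w : ups (proj_gen w) = ups w.
Proof. by elim: w => [|x w IH] //=; rewrite !ups_cons IH. Qed.

Lemma on_gen_proj w : on_gen (proj_gen w).
Proof. by elim: w => //= x w ->; rewrite eqxx. Qed.

Lemma on_gen_winv w : on_gen w -> on_gen (winv w).
Proof. by rewrite /on_gen /winv all_rev all_map. Qed.

Lemma on_gen_cancel_or_const x q : on_gen (x :: q) ->
  (exists u y v, x :: q = u ++ y :: linv y :: v) \/ all (pred1 x) q.
Proof.
elim: q x => [|y q IH] x /=; first by right.
move=> /and3P[hx hy hq]; have [->|ne] := eqVneq y x.
  have [[u [z [v E]]]|hall] := IH x (ltac:(by rewrite /= hx hq)).
    by left; exists (x :: u), z, v; rewrite E.
  by right; apply/andP.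
left; exists [::], x, q; congr [:: _, _ & _].
move: x y hx hy ne => [a b] [c d] /= /eqP -> /eqP ->.
by case: b; case: d; rewrite ?eqxx.
Qed.

Lemma on_gen_cancel_pair q : on_gen q -> q != [::] -> ups q = 0 ->
  exists u x v, q = u ++ x :: linv x :: v.
Proof.
case: q => [//|x q] hq _ h0; have [//|/all_pred1P Eq] := on_gen_cancel_or_const hq.
move: h0; have -> : x :: q = nseq (size q).+1 x by rewrite /= -Eq.
by rewrite ups_nseq; case: x.2; lia.
Qed.

Lemma on_gen_balanced_ind (P : word m -> Prop) : P [::] ->
  (forall u x v, on_gen (u ++ v) -> ups (u ++ v) = 0 -> P (u ++ v) ->
     P (u ++ x :: linv x :: v)) ->
  forall q, on_gen q -> ups q = 0 -> P q.
Proof.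
move=> P0 Pcancel q; have [k] := ubnP (size q); elim: k q => [//|k IH] q.
have [-> //|ne] := eqVneq q [::].
move=> hsize hq h0; have [u [x [v E]]] := on_gen_cancel_pair hq ne h0; subst q.
have huv : on_gen (u ++ v).
  by move: hq; rewrite /on_gen !all_cat /= => /andP[-> /and3P[_ _ ->]].
have h0' : ups (u ++ v) = 0 by move: h0; rewrite !ups_cat ups_cancel.
by apply: Pcancel => //; apply: IH => //; move: hsize; rewrite !size_cat /=; lia.
Qed.

End Words.

Section F0Action.
Local Open Scope ring_scope.
Variables (m : nat) (T : Type) (a : word m -> T -> T).
Hypothesis Ha : is_F0_action a.
Implicit Types (x : letter m) (u v w g p q : word m) (s : T).

Lemma act_nil s : a [::] s = s.
Proof. by case: Ha. Qed.

Lemma act_cat u v s : inK u -> inK v -> a (u ++ v) s = a u (a v s).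
Proof. by case: Ha => _ H _; apply: H. Qed.

Lemma act_cancel u x v s : inK (u ++ v) -> a (u ++ x :: linv x :: v) s = a (u ++ v) s.
Proof. by case: Ha => _ _ H; apply: H. Qed.

Lemma act_cancel_pair x s : a [:: x; linv x] s = s.
Proof. by have := @act_cancel [::] x [::] s; rewrite act_nil; apply; rewrite /inK ups_nil. Qed.

Lemma act_cancel_word p u v s : inK (u ++ v) -> a (u ++ p ++ winv p ++ v) s = a (u ++ v) s.
Proof.
elim: p u v => [|x p IH] u v huv //=; rewrite winv_cons -!catA /=.
have -> : u ++ x :: p ++ winv p ++ linv x :: v = (u ++ [:: x]) ++ p ++ winv p ++ linv x :: v.
  by rewrite -catA.
rewrite IH; last by rewrite -catA /inK ups_cat ups_cancel -ups_cat.
by rewrite -catA act_cancel.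
Qed.

Lemma act_winvK u s : inK u -> a (winv u) (a u s) = s.
Proof.
move=> hu; rewrite -act_cat ?inK_winv //.
have := @act_cancel_word (winv u) [::] [::] s; rewrite /= winvK cats0 act_nil.
by apply; rewrite /inK ups_nil.
Qed.

Lemma act_conj_conjV x g s : inK g -> a (conjw x (conjw (linv x) g)) s = a g s.
Proof.
move=> hg; rewrite /conjw linvK /= -catA /=.
have := @act_cancel [::] x (g ++ [:: x; linv x]) s; rewrite /= => ->.
  by have := @act_cancel g x [::] s; rewrite cats0 => ->.
by rewrite /inK ups_cat ups_cancel ups_nil addr0.
Qed.

Lemma act_conjV_conj x g s : inK g -> a (conjw (linv x) (conjw x g)) s = a g s.
Proof. by have := @act_conj_conjV (linv x) g s; rewrite linvK. Qed.

Lemma act_on_gen_balanced i q u v s : on_gen i q -> ups q = 0 -> inK (u ++ v) ->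
  a (u ++ q ++ v) s = a (u ++ v) s.
Proof.
move=> hq h0; move: q hq h0 u v; apply: on_gen_balanced_ind => [//|p x q _ h0 IH] u v huv.
have -> : u ++ (p ++ x :: linv x :: q) ++ v = (u ++ p) ++ x :: linv x :: q ++ v.
  by rewrite -!catA.
rewrite act_cancel -?catA; first by rewrite -(IH u v huv) -!catA.
by move: huv h0; rewrite /inK !ups_cat => /eqP huv h0; apply/eqP; lia.
Qed.

End F0Action.

Section Orbits.
Variables (m : nat) (T : finType) (a : word m -> T -> T).
Hypothesis Ha : is_F0_action a.

Definition stable (A : {set T}) := forall w, inK w -> {in A, forall x, a w x \in A}.

Lemma stableT : stable [set: T].
Proof. by move=> w _ x _; rewrite in_setT. Qed.

Definition is_orbit (A : {set T}) := exists s, A = orb a s.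

Definition orbits_with (P : {set T} -> Prop) : {set {set T}} :=
  [set A | `[< is_orbit A /\ P A >]].

Lemma orbits_withP P A : A \in orbits_with P <-> is_orbit A /\ P A.
Proof. by rewrite inE; split => /asboolP. Qed.

Lemma eq_orbits_with (P Q : {set T} -> Prop) :
  (forall A, P A <-> Q A) -> orbits_with P = orbits_with Q.
Proof.
move=> PQ; apply/setP => A.
by apply/idP/idP => /orbits_withP [hA /PQ hP]; apply/orbits_withP; split.
Qed.

Lemma mem_orb s x : x \in orb a s <-> exists w, inK w /\ a w s = x.
Proof. by rewrite inE; split => /asboolP. Qed.

Lemma orb_refl s : s \in orb a s.
Proof. by apply/mem_orb; exists [::]; rewrite /inK ups_nil act_nil. Qed.

Lemma orb_stable s : stable (orb a s).
Proof.
move=> w hw x /mem_orb [u [hu <-]]; apply/mem_orb.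
by exists (w ++ u); rewrite inK_cat ?act_cat.
Qed.

Lemma orb_eq s x : x \in orb a s -> orb a x = orb a s.
Proof.
move=> /mem_orb [u [hu <-]]; apply/setP => y; apply/idP/idP => /mem_orb [w [hw <-]].
  by do 2!apply: orb_stable => //; apply: orb_refl.
apply/mem_orb; exists (w ++ winv u).
by rewrite inK_cat ?inK_winv // act_cat ?inK_winv ?act_winvK.
Qed.

Lemma imset_orb_conj (tau : T -> T) x s :
  (forall g y, inK g -> tau (a g y) = a (conjw x g) (tau y)) ->
  tau @: orb a s = orb a (tau s).
Proof.
move=> htau; apply/setP => y.
apply/imsetP/idP => [[_ /mem_orb [w [hw <-]] ->] | /mem_orb [w [hw <-]]].
  by apply/mem_orb; exists (conjw x w); rewrite inK_conj ?htau.
exists (a (conjw (linv x) w) s); last by rewrite htau ?inK_conj ?act_conj_conjV.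
by apply/mem_orb; exists (conjw (linv x) w); rewrite inK_conj.
Qed.

Lemma leq_orbits_with (tau : T -> T) x (P Q : {set T} -> Prop) : injective tau ->
  (forall g y, inK g -> tau (a g y) = a (conjw x g) (tau y)) ->
  (forall s, P (orb a s) -> Q (tau @: orb a s)) ->
  #|orbits_with P| <= #|orbits_with Q|.
Proof.
move=> tau_inj htau hPQ; rewrite -(card_imset _ (imset_inj tau_inj)).
apply/subset_leq_card/subsetP => _ /imsetP [_ /orbits_withP [[s ->] hP] ->].
by apply/orbits_withP; split; [exists (tau s); apply: imset_orb_conj htau | apply: hPQ].
Qed.

End Orbits.

Section IsoOn.
Variable m : nat.
Implicit Types T : finType.

Definition iso_on T1 T2 (a1 : word m -> T1 -> T1) (A1 : {set T1})
    (a2 : word m -> T2 -> T2) (A2 : {set T2}) (f : T1 -> T2) :=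
  [/\ {in A1 &, injective f}, f @: A1 = A2 &
      forall w, inK w -> {in A1, forall x, f (a1 w x) = a2 w (f x)}].

Lemma iso_on_id T (a : word m -> T -> T) A : iso_on a A a A id.
Proof. by split => //; rewrite imset_id. Qed.

Lemma iso_on_comp T1 T2 T3 a1 (A1 : {set T1}) a2 (A2 : {set T2}) a3 (A3 : {set T3}) f g :
  iso_on a1 A1 a2 A2 f -> iso_on a2 A2 a3 A3 g -> iso_on a1 A1 a3 A3 (g \o f).
Proof.
move=> [fi <- fe] [gi <- ge]; have fA x : x \in A1 -> f x \in f @: A1 by apply: imset_f.
split; first by move=> x y hx hy /gi /fi; apply; rewrite ?fA.
  by rewrite imset_comp.
by move=> w hw x hx /=; rewrite fe ?ge ?fA.
Qed.

Lemma iso_on_sym T1 T2 a1 (A1 : {set T1}) a2 (A2 : {set T2}) f (x0 : T1) :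
  stable a1 A1 -> iso_on a1 A1 a2 A2 f -> exists g, iso_on a2 A2 a1 A1 g.
Proof.
move=> hA [fi <- fe]; pose g y := odflt x0 [pick x in A1 | f x == y]; exists g.
have gK : {in A1, cancel f g}.
  move=> x hx; rewrite /g; case: pickP => [x' /andP[hx' /eqP e] | none] /=; first exact: fi.
  by have := none x; rewrite hx eqxx.
split.
- by move=> ? ? /imsetP [x hx ->] /imsetP [y hy ->]; rewrite !gK // => ->.
- by rewrite -imset_comp (eq_in_imset gK) imset_id.
- by move=> w hw _ /imsetP [x hx ->]; rewrite -fe // !gK ?hA.
Qed.

Lemma iso_on_imset T1 T2 a1 (A : {set T1}) a2 (f : T1 -> T2) : injective f ->
  (forall w, inK w -> forall x, f (a1 w x) = a2 w (f x)) -> iso_on a1 A a2 (f @: A) f.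
Proof. by move=> fi fe; split => // [x y _ _ /fi | w hw x _] //; apply: fe. Qed.

Lemma orbit_isoE T1 T2 a1 a2 (A : {set T2}) :
  orbit_iso a2 a1 A <-> exists f, iso_on a1 [set: T1] a2 A f.
Proof.
split=> -[f [fi fim fe]]; exists f; split.
- by move=> x y _ _ /fi.
- apply/setP => y; apply/imsetP/idP => [[x _ ->] | /fim [x <-]].
    by apply/fim; exists x.
  by exists x; rewrite ?in_setT.
- by move=> w hw x _; apply: fe.
- by move=> x y /fi; apply; rewrite in_setT.
- by move=> y; rewrite -fim; split=> [/imsetP [x _ ->] | [x <-]]; [exists x | apply: imset_f].
- by move=> w x hw; apply: fe; rewrite ?in_setT.
Qed.

End IsoOn.

Section Twist.
Variable n : nat.
Implicit Types T : finType.

Lemma twist1E (T : Type) (a : word n.+1 -> T -> T) w s :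
  twist 1 a w s = a (conjw (linv z1) w) s.
Proof. by []. Qed.

Lemma stable_twist T (a : word n.+1 -> T -> T) (A : {set T}) :
  stable a A -> stable (twist 1 a) A.
Proof. by move=> hA w hw x hx; rewrite twist1E hA ?inK_conj. Qed.

Lemma iso_on_twist T1 T2 (a1 : word n.+1 -> T1 -> T1) (A1 : {set T1})
    (a2 : word n.+1 -> T2 -> T2) (A2 : {set T2}) f :
  iso_on a1 A1 a2 A2 f -> iso_on (twist 1 a1) A1 (twist 1 a2) A2 f.
Proof. by case=> fi fim fe; split => // w hw x hx; rewrite !twist1E fe ?inK_conj. Qed.

Lemma iso_on_untwist T1 T2 (a1 : word n.+1 -> T1 -> T1) (A1 : {set T1})
    (a2 : word n.+1 -> T2 -> T2) (A2 : {set T2}) f :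
  is_F0_action a1 -> is_F0_action a2 ->
  iso_on (twist 1 a1) A1 (twist 1 a2) A2 f -> iso_on a1 A1 a2 A2 f.
Proof.
move=> H1 H2 [fi fim fe]; split => // w hw x hx.
by have := fe _ (inK_conj z1 hw) x hx; rewrite !twist1E !act_conjV_conj.
Qed.

End Twist.

Section ExtendedAction.
Variables (n : nat) (S : finType) (act actF : word n.+1 -> S -> S).
Hypotheses (Hact : is_F0_action act) (HF : is_F_action actF).
Hypothesis Hext : forall w s, inK w -> actF w s = act w s.

Lemma actF_cat u v s : actF (u ++ v) s = actF u (actF v s).
Proof. by case: HF => _ H _; apply: H. Qed.

Lemma actF_letterK x : cancel (actF [:: x]) (actF [:: linv x]).
Proof. by case: HF => _ _ H s; rewrite -actF_cat /= -{2}[x]linvK H. Qed.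

Lemma actF_letter_conj x g s : inK g ->
  actF [:: x] (act g s) = act (conjw x g) (actF [:: x] s).
Proof.
move=> hg; rewrite -(Hext _ hg) -(Hext _ (inK_conj x hg)) -!actF_cat.
have -> : conjw x g ++ [:: x] = ([:: x] ++ g) ++ [:: linv x] ++ [:: x] by rewrite /conjw /= -catA.
by rewrite [RHS]actF_cat (actF_cat [:: linv x]) actF_letterK.
Qed.

Lemma leq_mult_twist (O : finType) (aO : word n.+1 -> O -> O) :
  (mult act aO <= mult act (twist 1 aO))%N.
Proof.
apply: (leq_orbits_with Hact (can_inj (actF_letterK z1)) (@actF_letter_conj z1)).
move=> s /orbit_isoE [f hf]; apply/orbit_isoE; exists (actF [:: z1] \o f).
apply: iso_on_comp (iso_on_twist hf) (iso_on_imset _ (can_inj (actF_letterK z1)) _).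
by move=> w hw x; rewrite twist1E actF_letter_conj ?inK_conj ?act_conj_conjV.
Qed.

Lemma geq_mult_twist (O : finType) (aO : word n.+1 -> O -> O) : is_F0_action aO ->
  (mult act (twist 1 aO) <= mult act aO)%N.
Proof.
move=> HO; apply: (leq_orbits_with Hact (can_inj (actF_letterK (linv z1)))
  (@actF_letter_conj (linv z1))).
move=> s /orbit_isoE [f hf]; apply/orbit_isoE; exists (actF [:: linv z1] \o f).
apply: (iso_on_untwist HO Hact).
apply: iso_on_comp hf (iso_on_imset _ (can_inj (actF_letterK _)) _).
by move=> w hw x; rewrite actF_letter_conj.
Qed.

End ExtendedAction.

Section ClassMatching.
Variables (X : finType) (P : X -> Prop) (C D : X -> {set X}).
Hypothesis C_refl : forall x, P x -> x \in C x.
Hypothesis C_class : forall x y, P x -> y \in C x -> C y = C x /\ D y = D x.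
Hypothesis D_disjoint : forall x y z, P x -> P y -> z \in D x -> z \in D y -> y \in C x.
Hypothesis card_CD : forall x, P x -> #|C x| = #|D x|.

Lemma class_matching : exists phi : X -> X,
  (forall x, P x -> phi x \in D x) /\
  (forall x y, P x -> P y -> phi x = phi y -> x = y).
Proof.
(* the k-th element of C x is sent to the k-th element of D x *)
pose phi x := nth x (enum (D x)) (index x (enum (C x))).
have index_lt x : P x -> (index x (enum (C x)) < size (enum (D x)))%N.
  by move=> Px; rewrite -cardE -card_CD // cardE index_mem mem_enum C_refl.
have phiD x : P x -> phi x \in D x by move=> Px; rewrite -mem_enum mem_nth ?index_lt.
exists phi; split=> // x y Px Py e.
have yCx : y \in C x by apply: D_disjoint (phiD x Px) _; rewrite // e phiD.
have [eC eD] := C_class Px yCx.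
have := index_lt y Py; rewrite eC eD => lt_y.
move: e; rewrite /phi eC eD (set_nth_default y x (index_lt x Px)) => /eqP.
rewrite nth_uniq ?enum_uniq ?index_lt // => /eqP ei.
by apply: (index_inj x _ _ ei); rewrite mem_enum ?C_refl.
Qed.

End ClassMatching.

Section IsoClasses.
Variables (n : nat) (S : finType) (act : word n.+1 -> S -> S).
Hypothesis Hact : is_F0_action act.

Definition iso_class (T : finType) (a : word n.+1 -> T -> T) (A : {set T}) :=
  orbits_with act (fun B => exists f, iso_on a A act B f).

Lemma iso_class_eq (T1 T2 : finType) a1 (A1 : {set T1}) a2 (A2 : {set T2}) :
  (exists f, iso_on a1 A1 a2 A2 f) -> (exists g, iso_on a2 A2 a1 A1 g) ->
  iso_class a1 A1 = iso_class a2 A2.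
Proof.
move=> [f hf] [g hg]; apply: eq_orbits_with => B.
by split=> -[k hk]; [exists (k \o g); apply: iso_on_comp hg hk
                    | exists (k \o f); apply: iso_on_comp hf hk].
Qed.

Lemma mult_iso_class (O : finType) (aO : word n.+1 -> O -> O) :
  mult act aO = #|iso_class aO [set: O]|.
Proof.
have -> : mult act aO = #|orbits_with act (orbit_iso act aO)| by [].
by rewrite /iso_class (eq_orbits_with act (fun B => orbit_isoE aO act B)).
Qed.

Lemma iso_class_refl A : is_orbit act A -> A \in iso_class act A.
Proof. by move=> hA; apply/orbits_withP; split => //; exists id; apply: iso_on_id. Qed.

Lemma iso_class_congr A B : is_orbit act A -> B \in iso_class act A ->
  iso_class act B = iso_class act A /\ iso_class (twist 1 act) B = iso_class (twist 1 act) A.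
Proof.
move=> [s ->] /orbits_withP [_ [f hf]].
have [g hg] := iso_on_sym s (orb_stable (s := s) Hact) hf.
by split; apply: iso_class_eq; eexists;
  [exact: hg | exact: hf | exact: iso_on_twist hg | exact: iso_on_twist hf].
Qed.

Lemma iso_class_twist_disjoint A A' C : is_orbit act A -> is_orbit act A' ->
  C \in iso_class (twist 1 act) A -> C \in iso_class (twist 1 act) A' ->
  A' \in iso_class act A.
Proof.
move=> hA [s' hA'] /orbits_withP [_ [f hf]] /orbits_withP [_ [f' hf']].
rewrite hA' in hf' *.
have [g' hg'] := iso_on_sym s' (stable_twist (orb_stable (s := s') Hact)) hf'.
apply/orbits_withP; split; first by exists s'.
exists (g' \o f); apply: iso_on_untwist Hact Hact _.
exact: iso_on_comp hf hg'.
Qed.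

End IsoClasses.

Section BalancedMultiplicities.
Variables (n : nat) (S : finType) (act : word n.+1 -> S -> S).
Hypothesis Hact : is_F0_action act.
Hypothesis Hdecomp : forall s : S, exists (O : finType) (actO : word n.+1 -> O -> O),
  [/\ is_F0_action actO, F0_transitive actO, strongly_finite actO &
      orbit_iso act actO (orb act s)].
Hypothesis Hmult : forall (O : finType) (actO : word n.+1 -> O -> O),
  is_F0_action actO -> F0_transitive actO -> strongly_finite actO ->
  mult act actO = mult act (twist 1 actO).

Lemma card_iso_class_twist A : is_orbit act A ->
  #|iso_class act act A| = #|iso_class act (twist 1 act) A|.
Proof.
move=> [s ->]; have [O [aO [HO Htr Hsf /orbit_isoE [f hf]]]] := Hdecomp s.
have [[o _] _] := Htr; have [g hg] := iso_on_sym o (stableT aO) hf.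
have := Hmult HO Htr Hsf; rewrite !mult_iso_class.
rewrite (iso_class_eq act (ex_intro _ f hf) (ex_intro _ g hg)).
rewrite (iso_class_eq act (ex_intro _ f (iso_on_twist hf))
                         (ex_intro _ g (iso_on_twist hg))).
done.
Qed.

Lemma exists_orbit_shift : exists sigma : S -> S, injective sigma /\
  forall g s, inK g -> sigma (act g s) = act (conjw z1 g) (sigma s).
Proof.
have [phi [phiD phi_inj]] := class_matching (iso_class_refl (act := act))
  (iso_class_congr Hact) (iso_class_twist_disjoint Hact) card_iso_class_twist.
have /fin_all_exists [F hF] : forall A : {set S}, exists f : S -> S,
    is_orbit act A -> iso_on (twist 1 act) A act (phi A) f.
  move=> A; have [hA|] := pselect (is_orbit act A); last by exists id.
  by have /orbits_withP [_ [f hf]] := phiD A hA; exists f.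
have orbP x : is_orbit act (orb act x) by exists x.
have phi_orbit x : is_orbit act (phi (orb act x)).
  by have /orbits_withP [] := phiD _ (orbP x).
have sigma_mem x : F (orb act x) x \in phi (orb act x).
  by have [_ <- _] := hF _ (orbP x); rewrite imset_f ?orb_refl.
exists (fun x => F (orb act x) x); split.
- move=> x y e; have [[t et] [t' et']] := (phi_orbit x, phi_orbit y).
  have hx : F (orb act x) x \in orb act t by rewrite -et sigma_mem.
  have hy : F (orb act y) y \in orb act t' by rewrite -et' sigma_mem.
  have eorb : orb act x = orb act y.
    by apply: phi_inj => //; rewrite et et' -(orb_eq Hact hx) -(orb_eq Hact hy) e.
  have [Fi _ _] := hF _ (orbP x).
  apply: Fi; [exact: orb_refl | by rewrite eorb orb_refl | by rewrite e eorb].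
- move=> g x hg; rewrite (orb_eq Hact (_ : act g x \in orb act x)); last first.
    by apply/mem_orb; exists g.
  have [_ _ Fe] := hF _ (orbP x).
  by rewrite -Fe ?orb_refl ?inK_conj // twist1E act_conjV_conj.
Qed.

End BalancedMultiplicities.

Section ExtensionByShift.
Local Open Scope ring_scope.
Variables (m : nat) (i : 'I_m) (T : Type) (act : word m -> T -> T).
Hypothesis Hact : is_F0_action act.
Variables (sigma sigmaV : T -> T).
Hypotheses (sigmaK : cancel sigma sigmaV) (sigmaVK : cancel sigmaV sigma).
Hypothesis sigma_conj :
  forall g s, inK g -> sigma (act g s) = act (conjw (i, true) g) (sigma s).

Definition shift (b : bool) := if b then sigma else sigmaV.

Lemma shift_conj b g s : inK g -> shift b (act g s) = act (conjw (i, b) g) (shift b s).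
Proof.
case: b => hg /=; first exact: sigma_conj.
apply: (can_inj sigmaK); rewrite sigmaVK sigma_conj ?inK_conj //.
by rewrite sigmaVK -[(i, false)]/(linv (i, true)) act_conj_conjV.
Qed.

Lemma shiftK b : cancel (shift (~~ b)) (shift b).
Proof. by case: b. Qed.

Definition shift_word (w : word m) (s : T) := foldr (fun x => shift x.2) s w.

Lemma shift_word_cat u v s : shift_word (u ++ v) s = shift_word u (shift_word v s).
Proof. exact: foldr_cat. Qed.

Lemma shift_word_proj w s : shift_word (proj_gen i w) s = shift_word w s.
Proof. exact: foldr_map. Qed.

Lemma shift_word_conj w g s : inK g ->
  shift_word w (act g s) = act (proj_gen i w ++ g ++ winv (proj_gen i w)) (shift_word w s).
Proof.
move=> hg; elim: w => [|x w IH] /=; first by rewrite cats0.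
rewrite IH shift_conj; first by rewrite /conjw winv_cons -!catA.
by rewrite /inK !ups_cat ups_winv addrCA addrN addr0.
Qed.

Lemma shift_word_balanced q s : on_gen i q -> ups q = 0 -> shift_word q s = s.
Proof.
move: q; apply: on_gen_balanced_ind => // u x v _ _ IH.
by rewrite shift_word_cat /= shiftK -shift_word_cat.
Qed.

Definition shift_ext (w : word m) (s : T) := act (w ++ winv (proj_gen i w)) (shift_word w s).

Lemma inK_cat_winv_proj w : inK (w ++ winv (proj_gen i w)).
Proof. by rewrite /inK ups_cat ups_winv ups_proj_gen addrN. Qed.

Lemma shift_ext_agree w s : inK w -> shift_ext w s = act w s.
Proof.
move=> hw; rewrite /shift_ext -shift_word_proj.
rewrite shift_word_balanced ?on_gen_proj ?ups_proj_gen ?(eqP hw) //.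
have := @act_on_gen_balanced _ _ _ Hact i (winv (proj_gen i w)) w [::] s; rewrite !cats0.
by apply; rewrite ?on_gen_winv ?on_gen_proj ?ups_winv ?ups_proj_gen ?(eqP hw) ?oppr0.
Qed.

Lemma shift_ext_F_action : is_F_action shift_ext.
Proof.
split.
- by move=> s; rewrite /shift_ext /= act_nil.
- move=> u v s; rewrite /shift_ext shift_word_conj ?inK_cat_winv_proj //.
  rewrite -act_cat ?inK_cat_winv_proj //; last first.
    by rewrite /inK !ups_cat !ups_winv !ups_proj_gen; apply/eqP; lia.
  have cancel_u := act_cancel_word Hact (winv (proj_gen i u)); rewrite winvK in cancel_u.
  rewrite shift_word_cat proj_gen_cat winv_cat -!catA cancel_u //.
  by rewrite /inK !ups_cat !ups_winv !ups_proj_gen; apply/eqP; lia.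
- move=> x s; rewrite /shift_ext /= shiftK.
  have -> : winv (proj_gen i [:: x; linv x]) = [:: (i, x.2); linv (i, x.2)].
    by rewrite /winv /proj_gen /linv /= negbK.
  rewrite -[[:: x, linv x & _]]/([::] ++ [:: x, linv x & _]) act_cancel ?act_cancel_pair //.
  by rewrite /inK ups_cancel ups_nil.
Qed.

End ExtensionByShift.

Theorem lemma5p6 (n : nat) (S : finType) (act : word n.+1 -> S -> S)
  (Hact : is_F0_action act)
  (Hdecomp : forall s : S, exists (O : finType) (actO : word n.+1 -> O -> O),
      [/\ is_F0_action actO, F0_transitive actO, strongly_finite actO &
          orbit_iso act actO (orb act s)]) :
  (exists actF : word n.+1 -> S -> S, is_F_action actF /\
      forall w s, inK w -> actF w s = act w s)
  <->
  (forall (O : finType) (actO : word n.+1 -> O -> O),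
      is_F0_action actO -> F0_transitive actO -> strongly_finite actO ->
      mult act actO = mult act (twist 1 actO)).
Proof.
split=> [[actF [HF Hext]] O actO HO _ _ | Hmult].
  apply/eqP; rewrite eqn_leq.
  by rewrite (leq_mult_twist Hact HF Hext) (geq_mult_twist Hact HF Hext HO).
have [sigma [sigma_inj sigma_conj]] := exists_orbit_shift Hact Hdecomp Hmult.
have [sigmaV sigmaK sigmaVK] := injF_bij sigma_inj.
exists (shift_ext ord0 act sigma sigmaV); split.
  exact: shift_ext_F_action.
exact: shift_ext_agree.
Qed.
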